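(* Under the Gaussian copula model, for any $m\in\mathbb N$, $\alpha\in(0,1]$, $\rho\in(0,1]$ and $\delta\in(0,1]$, there exists $\bar n=\bar n(\alpha,\rho,\delta)<\infty$ such that $$p^{\mathrm{G}}_{\mathrm{success}}(n,m,\alpha,\rho)\ge1-\delta\quad\text{for all } n\ge\bar n.$$
   Context: Ordinal optimisation model: let $(Z_1,X_1),\dots,(Z_n,X_n)$ be i.i.d. copies of a pair $(Z,X)$ of real random variables. Order $Z_1,\dots,Z_n$ increasingly as $Z_{1:n}\le\dots\le Z_{n:n}$ and let $X_{\langle i\rangle}$ denote the $X$-value paired with $Z_{i:n}$. Let $x^*_\alpha$ be the $\alpha$-quantile of $X$. The success probability is $\Pr(\min_{1\le i\le m}X_{\langle i\rangle}\le x^*_\alpha)$. Gaussian copula model with correlation $\rho$: $Z,X$ have continuous marginal CDFs $F_Z,F_X$ and joint CDF $\boldsymbol\Phi_{\rho}(\Phi^{-1}(F_Z(z)),\Phi^{-1}(F_X(x)))$, with $\Phi$ the standard normal CDF and $\boldsymbol\Phi_\rho$ the standard bivariate normal CDF with correlation $\rho$. The success probability in this model is $p^{\mathrm{G}}_{\mathrm{success}}(n,m,\alpha,\rho)$ (defined for $n\ge m$). *)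

From HB Require Import structures.
From mathcomp Require Import all_boot all_order all_algebra.
From mathcomp Require Import all_classical all_reals all_analysis.
Set Implicit Arguments. Unset Strict Implicit. Unset Printing Implicit Defensive.
Import Order.TTheory GRing.Theory Num.Def Num.Theory.
Import numFieldNormedType.Exports.
Local Open Scope classical_set_scope.
Local Open Scope ring_scope.

Section defs.
Context {R : realType}.

Definition Phi (x : R) : R := fine (normal_prob 0 1 `]-oo, x]).

(* Standard bivariate normal with correlation rho, realised as
   (U, rho U + sqrt(1-rho^2) W) with U, W independent N(0,1).
   Gaussian copula: C_rho(u,v) = Phi2_rho(Phi^{-1}(u), Phi^{-1}(v))
   = P(Phi(U) <= u, Phi(V) <= v), u, v in [0,1]. *)
Definition gauss_copula (rho u v : R) : R :=
  fine ((normal_prob 0 1 \x normal_prob 0 1)%E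
    [set p : R * R | Phi p.1 <= u /\
                     Phi (rho * p.1 + Num.sqrt (1 - rho ^+ 2) * p.2) <= v]).

Definition cdf d (T : measurableType d) (P : probability T R) (Y : T -> R)
  (y : R) : R := fine (P (Y @^-1` `]-oo, y])).

Definition quantile (F : R -> R) (alpha : R) : \bar R :=
  ereal_inf [set (x%:E) | x in [set x : R | alpha <= F x]].

(* indices 0..n-1 listed in increasing order of Z (stable sort):
   the i-th entry is the index of Z_{i+1:n} *)
Definition z_order n d (T : measurableType d) (Z : 'I_n -> T -> R) (w : T)
  : seq 'I_n := sort (fun i j => Z i w <= Z j w) (enum 'I_n).

Definition success_event n d (T : measurableType d) (Z X : 'I_n -> T -> R)
  (m : nat) (xstar : \bar R) : set T :=
  [set w | has (fun i => ((X i w)%:E <= xstar)%E) (take m (z_order Z w))].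

Definition pairs_independent n d (T : measurableType d) (P : probability T R)
  (Z X : 'I_n -> T -> R) : Prop :=
  forall A B : 'I_n -> set R, (forall i, measurable (A i)) ->
    (forall i, measurable (B i)) ->
    P (\bigcap_(i in [set: 'I_n]) (Z i @^-1` A i `&` X i @^-1` B i)) =
    (\prod_(i < n) P (Z i @^-1` A i `&` X i @^-1` B i))%E.

Definition gauss_copula_sample n d (T : measurableType d) (P : probability T R)
  (rho : R) (FZ FX : R -> R) (Z X : 'I_n -> T -> R) : Prop :=
  (forall i, measurable_fun setT (Z i)) /\
  (forall i, measurable_fun setT (X i)) /\
  continuous FZ /\ continuous FX /\
  (forall i z, cdf P (Z i) z = FZ z) /\
  (forall i x, cdf P (X i) x = FX x) /\
  (forall i z x, fine (P (Z i @^-1` `]-oo, z] `&` X i @^-1` `]-oo, x])) =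
                 gauss_copula rho (FZ z) (FX x)) /\
  pairs_independent P Z X.

End defs.

From Pilot Require Import Defs.
From HB Require Import structures.
From mathcomp Require Import all_boot all_order all_algebra.
From mathcomp Require Import all_classical all_reals all_analysis.
From mathcomp Require Import ring lra.
From mathcomp Require Import measurable_realfun.
Import Order.TTheory GRing.Theory Num.Def Num.Theory.
Import numFieldNormedType.Exports.
Set Implicit Arguments. Unset Strict Implicit. Unset Printing Implicit Defensive.
Local Open Scope classical_set_scope.
Local Open Scope ring_scope.

(* Put u = c/n with c = 2/delta and choose z0 with F_Z(z0) = u. The sample
   fails only if no Z_i lies below z0, which has probability
   (1 - u)^n <= 1/(1 + c) < delta/2, or if some Z_i <= z0 comes with
   X_i > x*_alpha. Writing the copula pair as (U, rho U + s W) with W an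
   independent normal, Z_i <= z0 means U <= a where Phi(a) = u; once n is
   large, a is so negative that X_i > x*_alpha forces W > b - rho a for a
   fixed b with Phi(b) <= alpha. Each such pair thus has probability at most
   u (1 - Phi(b - rho a)) <= u delta^2/4, and by the union bound all of them
   together at most c delta^2/4 = delta/2. *)

Section real_limits.
Context {R : realType}.

Lemma lipschitz1_continuous (f : R -> R) :
  (forall x y, `|f x - f y| <= `|x - y|) -> continuous f.
Proof.
move=> f1 x; apply/cvgrPdist_lt => e e0.
near=> y; apply: le_lt_trans (f1 _ _) _.
near: y; apply: cvgr_dist_lt => //; exact: cvg_id.
Unshelve. all: by end_near.
Qed.

Lemma cvgNy_dist_lt (f : R -> R) (l e : R) : f @ -oo --> l -> 0 < e ->
  exists M, forall x, x <= M -> `|l - f x| < e.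
Proof.
move=> /cvgrPdist_lt /[apply] -[M [_ fM]].
by exists (M - 1) => x xM; apply: fM; lra.
Qed.

Lemma cvgy_dist_lt (f : R -> R) (l e : R) : f @ +oo --> l -> 0 < e ->
  exists M, forall x, M <= x -> `|l - f x| < e.
Proof.
move=> /cvgrPdist_lt /[apply] -[M [_ fM]].
by exists (M + 1) => x xM; apply: fM; lra.
Qed.

Lemma cvgNy0_lt (f : R -> R) (e : R) : f @ -oo --> 0 -> 0 < e ->
  exists x, f x < e.
Proof.
move=> f0 e0; have [M fM] := cvgNy_dist_lt f0 e0; exists M.
by have := fM M (lexx M); rewrite sub0r normrN; apply: le_lt_trans; exact: ler_norm.
Qed.

Lemma IVT_cvgNy0 (f : R -> R) (A u : R) : continuous f -> f @ -oo --> 0 ->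
  0 < u < f A -> exists2 a, a <= A & f a = u.
Proof.
move=> cf f0 /andP[u0 uA]; have [M fM] := cvgNy_dist_lt f0 u0.
have aLA : minr M A <= A by rewrite ge_min lexx orbT.
have faL : f (minr M A) < u.
  have aLM : minr M A <= M by rewrite ge_min lexx.
  have := fM _ aLM; rewrite sub0r normrN.
  by apply: le_lt_trans; exact: ler_norm.
have u_between : minr (f (minr M A)) (f A) <= u <= maxr (f (minr M A)) (f A).
  by rewrite ge_min le_max (ltW faL) (ltW uA) orbT.
have [a] := IVT aLA (continuous_subspaceT cf) u_between.
by rewrite in_itv /= => /andP[_ aA] fa; exists a.
Qed.

Lemma IVT_cvg01 (f : R -> R) (u : R) : continuous f ->
  f @ -oo --> 0 -> f @ +oo --> (1 : R) -> 0 < u < 1 -> exists z, f z = u.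
Proof.
move=> cf f0 f1 /andP[u0 u1].
have u1' : 0 < 1 - u by rewrite subr_gt0.
have [M fM] := cvgy_dist_lt f1 u1'.
have ufM : 0 < u < f M.
  by rewrite u0 /=; have := fM M (lexx M); have := ler_norm (1 - f M); lra.
by have [a _ fa] := IVT_cvgNy0 cf f0 ufM; exists a.
Qed.

End real_limits.

Lemma measurable_preimageT {R : realType} d (T : measurableType d)
    (f : T -> R) (B : set R) :
  measurable_fun setT f -> measurable B -> measurable (f @^-1` B).
Proof. by move=> mf mB; rewrite -[_ @^-1` _]setTI; exact: mf. Qed.

Lemma measurable_EFin_le {R : realType} d (T : measurableType d)
    (f : T -> R) (xs : \bar R) :
  measurable_fun setT f -> measurable [set w | ((f w)%:E <= xs)%E].
Proof.
move=> mf; rewrite -[X in measurable X]setTI.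
by apply: (@measurable_lee _ _ _ setT) => //; exact/measurable_EFinP.
Qed.

Section cdf_properties.
Context {R : realType} d (T : measurableType d) (P : probability T R).
Variable Y : T -> R.
Hypothesis mY : measurable_fun setT Y.

Let Y_RV : {RV P >-> R} := mfun_Sub (mem_set mY : Y \in mfun).

Lemma cdf_cvgNy0 : Defs.cdf P Y @ -oo --> (0 : R).
Proof. exact/fine_cvg/(cvg_cdfNy0 Y_RV). Qed.

Lemma cdf_cvgy1 : Defs.cdf P Y @ +oo --> (1 : R).
Proof. exact/fine_cvg/(cvg_cdfy1 Y_RV). Qed.

Lemma cdf_le : {homo Defs.cdf P Y : x y / x <= y}.
Proof.
move=> x y xy; rewrite fine_le ?fin_num_measure //.
- exact: measurable_preimageT.
- exact: measurable_preimageT.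
- exact: (cdf_nondecreasing Y_RV xy).
Qed.

End cdf_properties.

Section standard_normal.
Context {R : realType}.
Local Notation N := (normal_prob (0:R) 1).
Local Notation Phi := (@Phi R).

Lemma normal_pdf01_le1 (t : R) : normal_pdf 0 1 t <= 1.
Proof.
apply: le_trans (normal_pdf_ub _ _ _) _; first exact: oner_neq0.
have pi2 : 1 <= (1:R) ^+ 2 * pi *+ 2.
  by rewrite expr2 mulr1 mul1r mulr2n; have := pi_ge2 R; lra.
rewrite /normal_peak invr_le1 ?unitfE ?sqrtr_eq0 -?ltNge ?sqrtr_gt0; try lra.
by rewrite -[leLHS]sqrtr1; apply: ler_wsqrtr.
Qed.

Local Open Scope ereal_scope.

Lemma normal_prob_itv_le (x y : R) : (x <= y)%R -> N `]x, y] <= (y - x)%:E.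
Proof.
move=> xy.
apply: (@le_trans _ _ (\int[lebesgue_measure]_(t in `]x, y]) (cst 1%R t)%:E)).
  apply: ge0_le_integral => //=.
  - by move=> t _; rewrite lee_fin normal_pdf_ge0.
  - apply/measurable_EFinP; apply: measurable_funTS; exact: measurable_normal_pdf.
  - by move=> t _; rewrite lee_fin normal_pdf01_le1.
rewrite (_ : (fun t => (cst 1%R t)%:E) = cst 1) // integral_cst //=.
by rewrite lebesgue_measure_itv /= lte_fin; case: ltP => h; rewrite mul1e // lee_fin; lra.
Qed.

(* On ]x, y] we have t^2 <= x^2 + y^2, which bounds the density from below
   by a positive constant. *)
Lemma normal_prob_itv_gt0 (x y : R) : (x < y)%R -> 0 < N `]x, y].
Proof.
move=> xy; pose c : R := (normal_peak (1:R) * expR (- (x ^+ 2 + y ^+ 2)))%R.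
have c0 : (0 < c)%R by rewrite mulr_gt0 ?expR_gt0 // normal_peak_gt0 // oner_neq0.
apply: (@lt_le_trans _ _ (\int[lebesgue_measure]_(t in `]x, y]) (cst c t)%:E)).
  rewrite (_ : (fun t => (cst c t)%:E) = cst c%:E) // integral_cst //=.
  rewrite lebesgue_measure_itv /= lte_fin xy /= -EFinD -EFinM lte_fin.
  by rewrite mulr_gt0 // subr_gt0.
apply: ge0_le_integral => //=.
- by move=> t _; rewrite lee_fin ltW.
- apply/measurable_EFinP; apply: measurable_funTS; exact: measurable_normal_pdf.
move=> t; rewrite in_itv /= => /andP[xt ty].
rewrite lee_fin normal_pdfE ?oner_neq0 // /c /normal_fun.
rewrite ler_pM2l ?normal_peak_gt0 ?oner_neq0 // ler_expR subr0 mulNr lerN2.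
have t2 : (t ^+ 2 <= x ^+ 2 + y ^+ 2)%R.
  by rewrite !expr2; have [t0|t0] := leP 0%R t; nra.
rewrite expr1n mulr2n ler_pdivrMr; last by lra.
by have := sqr_ge0 t; nra.
Qed.

Lemma normal_prob_split (x y : R) : (x <= y)%R ->
  N `]-oo, y] = N `]-oo, x] + N `]x, y].
Proof.
move=> xy; rewrite (@itv_bndbnd_setU _ _ _ (BRight x)) // measureU //.
by rewrite -subset0 => t [] /=; rewrite !in_itv /= => tx /andP[xt _]; lra.
Qed.

Local Close Scope ereal_scope.

Lemma Phi_sub (x y : R) : x <= y -> Phi y - Phi x = fine (N `]x, y]).
Proof.
move=> xy; rewrite /Defs.Phi (normal_prob_split xy) fineD ?fin_num_measure //.
by rewrite addrC addKr.
Qed.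

Lemma Phi_ge0 x : 0 <= Phi x.
Proof. exact: fine_ge0. Qed.

Lemma Phi_le1 x : Phi x <= 1.
Proof. by rewrite /Defs.Phi -lee_fin fineK ?fin_num_measure ?probability_le1. Qed.

Lemma Phi_lt x y : x < y -> Phi x < Phi y.
Proof.
move=> xy; rewrite -subr_gt0 Phi_sub ?ltW // fine_gt0 // normal_prob_itv_gt0 //=.
by rewrite (le_lt_trans (probability_le1 _ _)) // ltry.
Qed.

Lemma Phi_le x y : x <= y -> Phi x <= Phi y.
Proof. by rewrite le_eqVlt => /predU1P[->//|/Phi_lt/ltW]. Qed.

Lemma Phi_gt0 x : 0 < Phi x.
Proof. by apply: le_lt_trans (Phi_ge0 (x - 1)) _; apply: Phi_lt; lra. Qed.

Lemma Phi_lt1 x : Phi x < 1.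
Proof. by apply: lt_le_trans (Phi_le1 (x + 1)); apply: Phi_lt; lra. Qed.

Lemma Phi_lipschitz1 x y : `|Phi x - Phi y| <= `|x - y|.
Proof.
wlog xy : x y / x <= y.
  move=> H; have [/H//|/ltW/H] := leP x y.
  by rewrite distrC [`|x - y|]distrC.
rewrite distrC [`|x - y|]distrC Phi_sub // !ger0_norm ?subr_ge0 ?fine_ge0 //.
by rewrite -lee_fin fineK ?fin_num_measure // normal_prob_itv_le.
Qed.

Lemma Phi_continuous : continuous Phi.
Proof. exact: lipschitz1_continuous Phi_lipschitz1. Qed.

Lemma measurable_Phi : measurable_fun setT Phi.
Proof. exact: continuous_measurable_fun Phi_continuous. Qed.

Lemma Phi_cvgNy0 : Phi @ -oo --> (0 : R).
Proof. exact: (@cdf_cvgNy0 R _ _ N idfun (@measurable_id _ _ setT)). Qed.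

Lemma Phi_cvgy1 : Phi @ +oo --> (1 : R).
Proof. exact: (@cdf_cvgy1 R _ _ N idfun (@measurable_id _ _ setT)). Qed.

Lemma normal_prob_ray_gt (c : R) : fine (N `]c, +oo[) = 1 - Phi c.
Proof. by rewrite -setCitvl probability_setC // fineB ?fin_num_measure. Qed.

Lemma Phi_tail_le (eps : R) : 0 < eps ->
  exists2 K, 0 <= K & forall y, K <= y -> 1 - Phi y <= eps.
Proof.
move=> eps0; have [M PhiM] := cvgy_dist_lt Phi_cvgy1 eps0.
exists (maxr M 0) => [|y]; first by rewrite le_max lexx orbT.
rewrite ge_max => /andP[My _]; have := PhiM y My.
by rewrite ger0_norm ?subr_ge0 ?Phi_le1 // => /ltW.
Qed.

Lemma Phi_eq_divn (A c : R) : 0 < c ->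
  exists nbar : nat, forall n, (nbar <= n)%N -> exists2 a, a <= A & n%:R * Phi a = c.
Proof.
move=> c0; exists (truncn (c / Phi A)).+1 => n nbar_n.
have n0 : 0 < n%:R :> R by rewrite ltr0n (leq_trans _ nbar_n).
have cA : c / Phi A < n%:R.
  by apply: lt_le_trans (truncnS_gt _) _; rewrite ler_nat.
have cn : 0 < c / n%:R < Phi A.
  by rewrite divr_gt0 //= ltr_pdivrMr // mulrC -ltr_pdivrMr ?Phi_gt0.
have [a aA Pa] := IVT_cvgNy0 Phi_continuous Phi_cvgNy0 cn.
by exists a => //; rewrite Pa mulrCA divff ?mulr1 // gt_eqF.
Qed.

End standard_normal.

Section gauss_copula_tail.
Context {R : realType} (rho : R).
Hypothesis rho01 : 0 < rho <= 1.
Local Notation N := (normal_prob (0:R) 1).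
Local Notation Phi := (@Phi R).
Local Notation s := (Num.sqrt (1 - rho ^+ 2)).

Definition copula_set (u v : R) : set (R * R) :=
  [set p | Phi p.1 <= u /\ Phi (rho * p.1 + s * p.2) <= v].

Lemma gauss_copulaE u v : gauss_copula rho u v = fine ((N \x N)%E (copula_set u v)).
Proof. by []. Qed.

Let s01 : 0 <= s <= 1.
Proof.
rewrite sqrtr_ge0 /= -[leRHS]sqrtr1; apply: ler_wsqrtr.
by have := sqr_ge0 rho; lra.
Qed.

Lemma measurable_copula_set u v : measurable (copula_set u v).
Proof.
have mV : measurable_fun setT (fun p : R * R => Phi (rho * p.1 + s * p.2)).
  exact: (measurableT_comp measurable_Phi (measurable_funD
     (measurable_funM (measurable_cst _) measurable_fst)
     (measurable_funM (measurable_cst _) measurable_snd))).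
rewrite (_ : copula_set u v = (Phi \o fst) @^-1` `]-oo, u] `&`
    (fun p : R * R => Phi (rho * p.1 + s * p.2)) @^-1` `]-oo, v]).
  apply: measurableI; apply: measurable_preimageT => //.
  exact: measurableT_comp measurable_Phi measurable_fst.
by apply/seteqP; split => p /=; rewrite !in_itv.
Qed.

Lemma copula_set_sub a v : copula_set (Phi a) v `<=` `]-oo, a] `*` setT.
Proof.
move=> p [p1a _]; split => //=; rewrite in_itv /= leNgt.
by apply/negP => /Phi_lt; rewrite ltNge p1a.
Qed.

Lemma rect_setD_copula_set_sub a b v : 0 <= b - rho * a -> Phi b <= v ->
  (`]-oo, a] `*` setT) `\` copula_set (Phi a) v `<=`
  `]-oo, a] `*` `]b - rho * a, +oo[.
Proof.
move=> c0 bv p [[/= p1a _] notS]; split => //=.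
move: p1a; rewrite !in_itv /= andbT => p1a.
have bV : b < rho * p.1 + s * p.2.
  rewrite ltNge; apply/negP => /Phi_le Vb; apply: notS; split.
    exact: Phi_le.
  exact: le_trans Vb bv.
have ra : rho * p.1 <= rho * a by rewrite ler_pM2l //; case/andP: rho01.
have p2_gt0 : 0 < p.2.
  rewrite ltNge; apply/negP => p2.
  have : s * p.2 <= 0 by rewrite mulr_ge0_le0 //; case/andP: s01.
  lra.
have : s * p.2 <= p.2 by rewrite ger_pMl //; case/andP: s01.
lra.
Qed.

Lemma gauss_copula_tail a b v : 0 <= b - rho * a -> Phi b <= v ->
  Phi a - gauss_copula rho (Phi a) v <= Phi a * (1 - Phi (b - rho * a)).
Proof.
move=> c0 bv; set c := b - rho * a.
set S := copula_set (Phi a) v; set Rc := `]-oo, a] `*` @setT R.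
have mS : measurable S by exact: measurable_copula_set.
have mRc : measurable Rc by exact: measurableX.
have NN_fin : forall A, measurable A -> ((N \x N)%E A \is a fin_num).
  move=> A mA; rewrite ge0_fin_numE ?measure_ge0 //.
  apply: (@le_lt_trans _ _ ((N \x N)%E setT)); first by apply: le_measure; rewrite ?inE.
  rewrite -setXTT product_measure1E // [X in (X * _)%E](_ : _ = 1%E).
    by rewrite [X in (_ * X)%E](_ : _ = 1%E) ?mule1 ?ltry //; exact: probability_setT.
  exact: probability_setT.
have muRc : (N \x N)%E Rc = N `]-oo, a].
  rewrite product_measure1E // [X in (_ * X)%E](_ : _ = 1%E) ?mule1 //.
  exact: probability_setT.
have split_Rc : (N \x N)%E Rc = ((N \x N) (Rc `\` S) + (N \x N) S)%E.
  by rewrite (measureDI (N \x N)%E mRc mS) (setIidr (copula_set_sub (a := a) (v := v))).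
have tail : ((N \x N) (Rc `\` S) <= N `]-oo, a] * N `]c, +oo[)%E.
  rewrite -product_measure1E //; apply: le_measure.
  - by rewrite inE; exact: measurableD.
  - by rewrite inE; exact: measurableX.
  - exact: rect_setD_copula_set_sub.
have PhiRc : Phi a = fine ((N \x N)%E Rc) by rewrite muRc.
rewrite gauss_copulaE -/S {1}PhiRc split_Rc fineD ?NN_fin //; last exact: measurableD.
rewrite addrK -normal_prob_ray_gt -fineM ?fin_num_measure //.
by rewrite fine_le ?NN_fin ?fin_numM ?fin_num_measure //; exact: measurableD.
Qed.

End gauss_copula_tail.

Lemma quantile_attained {R : realType} (F : R -> R) (alpha : R) :
  continuous F -> {homo F : x y / x <= y} -> (exists y, F y < alpha) ->
  quantile F alpha = +oo%E \/
  exists2 r, quantile F alpha = r%:E & alpha <= F r.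
Proof.
move=> cF mF [y0 Fy0]; set Q := [set x : R | alpha <= F x].
have [[x1 Qx1]|noQ] := pselect (exists x, Q x); last first.
  have Q0 : Q = set0 by apply/seteqP; split => // x Qx; apply: noQ; exists x.
  by left; rewrite /quantile -/Q Q0 image_set0 ereal_inf0.
have lbQ : has_lbound Q.
  exists y0 => x Qx; rewrite leNgt; apply/negP => xy.
  by have := mF _ _ (ltW xy); rewrite /Q /= in Qx; lra.
have nQ : Q !=set0 by exists x1.
right; exists (inf Q); first by rewrite /quantile -/Q ereal_inf_EFin.
(* If F (inf Q) < alpha, continuity keeps F below alpha near inf Q,
   contradicting the points of Q approaching inf Q. *)
rewrite leNgt; apply/negP => Finf.
have /cvgrPdist_lt /(_ (alpha - F (inf Q))) := cF (inf Q).
rewrite subr_gt0 => /(_ Finf) /nbhs_ballP [e /= e0 ball_e].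
have [x Qx xe] := @inf_adherent R Q e e0 (conj nQ lbQ).
have infx := ge_inf lbQ Qx.
have /ball_e : ball (inf Q) e x.
  by rewrite /ball /= distrC ger0_norm ?subr_ge0 //; lra.
rewrite /= distrC ger0_norm ?subr_ge0 ?mF //.
by have := mF _ _ infx; rewrite /Q /= in Qx; lra.
Qed.

Section order_statistics.
Context {R : realType} (n : nat) d (T : measurableType d) (Z X : 'I_n -> T -> R).

Lemma success_event_level (m : nat) (xs : \bar R) (z0 : R) w : (0 < m)%N ->
  (exists j, Z j w <= z0) ->
  (forall i, Z i w <= z0 -> ((X i w)%:E <= xs)%E) ->
  success_event Z X m xs w.
Proof.
move=> m0 [j Zj] lowX; rewrite /success_event /= /z_order.
set r := (fun i j : 'I_n => Z i w <= Z j w).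
have r_tr : transitive r by move=> a b c; exact: le_trans.
have j_in : j \in sort r (enum 'I_n) by rewrite mem_sort mem_enum.
have := sort_sorted (fun a b => le_total (Z a w) (Z b w)) (enum 'I_n).
case: (sort r (enum 'I_n)) j_in => [//|h t] j_in /= sorted_ht.
have hj : Z h w <= Z j w.
  move: j_in; rewrite inE => /predU1P[->//|jt].
  by have /allP /(_ _ jt) := order_path_min r_tr sorted_ht.
by case: m m0 => // m _ /=; rewrite lowX //; exact: le_trans hj Zj.
Qed.

Definition z_cmp (w : T) : {ffun 'I_n * 'I_n -> bool} :=
  [ffun p => Z p.1 w <= Z p.2 w].

Definition sort_by (b : {ffun 'I_n * 'I_n -> bool}) : seq 'I_n :=
  sort (fun i j => b (i, j)) (enum 'I_n).

Lemma z_order_cmp w : z_order Z w = sort_by (z_cmp w).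
Proof.
rewrite /z_order /sort_by; congr sort.
by apply/funext => i; apply/funext => j; rewrite ffunE.
Qed.

(* The order of the Z_i, hence the success event, depends on w only through
   the finitely many comparisons [z_cmp w]. *)
Lemma measurable_success_event (m : nat) (xs : \bar R) :
  (forall i, measurable_fun setT (Z i)) -> (forall i, measurable_fun setT (X i)) ->
  measurable (success_event Z X m xs).
Proof.
move=> mZ mX.
have mfibre b : measurable [set w | z_cmp w = b].
  rewrite (_ : [set w | z_cmp w = b] = \bigcap_(p in [set: 'I_n * 'I_n])
      [set w | (Z p.1 w <= Z p.2 w) = b p]).
    apply: fin_bigcap_measurable; first exact: finite_finset.
    move=> p _; rewrite -[X in measurable X]setTI.
    by have /(_ [set b p]) := measurable_fun_ler (mZ p.1) (mZ p.2) measurableT; apply.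
  apply/seteqP; split => w /=; first by move=> <- p _; rewrite ffunE.
  by move=> cmpw; apply/ffunP => p; rewrite ffunE; exact: cmpw.
rewrite (_ : success_event Z X m xs =
    \bigcup_(b in [set: {ffun 'I_n * 'I_n -> bool}]) ([set w | z_cmp w = b] `&`
      \big[setU/set0]_(i <- take m (sort_by b)) [set w | ((X i w)%:E <= xs)%E])).
  apply: fin_bigcup_measurable; first exact: finite_finset.
  move=> b _; apply: measurableI => //.
  by apply: bigsetU_measurable => i _; exact: measurable_EFin_le.
apply/seteqP; split => w /=; rewrite /success_event /= z_order_cmp.
  move=> hasX; exists (z_cmp w) => //; split => //.
  elim: (take m (sort_by (z_cmp w))) hasX => [//|i s IH] /=.
  by rewrite big_cons => /orP[h|/IH h]; [left | right].
move=> [b _ [<-]]; elim: (take m (sort_by (z_cmp w))) => [|i s IH] /=.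
  by rewrite big_nil.
by rewrite big_cons => -[->//|/IH ->]; rewrite orbT.
Qed.

End order_statistics.

Lemma Bernoulli_inv_le {R : realFieldType} (u : R) (k : nat) : 0 <= u <= 1 ->
  (1 - u) ^+ k * (1 + k%:R * u) <= 1.
Proof.
move=> /andP[u0 u1]; elim: k => [|k IH]; first by rewrite expr0 mul0r addr0 mul1r.
rewrite exprS -[k.+1]addn1 natrD; set q := (1 - u) ^+ k in IH *.
have q0 : 0 <= q by rewrite /q exprn_ge0 // subr_ge0.
have kuu : 0 <= q * ((k%:R + 1) * (u * u)).
  by rewrite !mulr_ge0 // addr_ge0.
have -> : (1 - u) * q * (1 + (k%:R + 1%:R) * u) =
  q * (1 + k%:R * u) - q * ((k%:R + 1) * (u * u)) by ring.
lra.
Qed.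

Lemma sample_size_bound {R : realFieldType} (delta u e : R) (n : nat) :
  0 < delta -> 0 <= u <= 1 -> n%:R * u = 2 / delta -> e <= delta ^+ 2 / 4 ->
  1 - delta <= 1 - (1 - u) ^+ n - n%:R * (u * e).
Proof.
move=> d0 u01 nu e_le.
have := Bernoulli_inv_le n u01; rewrite nu => q_le.
have nue : n%:R * (u * e) <= delta / 2.
  have -> : delta / 2 = 2 / delta * (delta ^+ 2 / 4) by field; exact: lt0r_neq0.
  by rewrite mulrA nu ler_wpM2l // divr_ge0 // ltW.
have q_half : (1 - u) ^+ n <= delta / 2.
  have q0 : 0 <= (1 - u) ^+ n by rewrite exprn_ge0 // subr_ge0; case/andP: u01.
  have c0 : 0 < 2 / delta by rewrite divr_gt0.
  rewrite -[delta / 2]invf_div -div1r ler_pdivlMr //.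
  by rewrite mulrDr mulr1 in q_le; lra.
lra.
Qed.

Section gauss_copula_sample.
Context {R : realType} (n : nat) d (T : measurableType d) (P : probability T R)
  (rho : R) (FZ FX : R -> R) (Z X : 'I_n -> T -> R).
Hypothesis sample : gauss_copula_sample P rho FZ FX Z X.
Hypothesis rho01 : 0 < rho <= 1.
Hypothesis n_gt0 : (0 < n)%N.
Local Notation Phi := (@Phi R).

Let mZ : forall i, measurable_fun setT (Z i). Proof. by case: sample. Qed.
Let mX : forall i, measurable_fun setT (X i). Proof. by case: sample => _ []. Qed.
Let i0 : 'I_n := Ordinal n_gt0.

Let FZ_cdf : FZ = Defs.cdf P (Z i0).
Proof. by case: sample => _ [_ [_ [_ [cdfZ _]]]]; apply/funext => z; rewrite cdfZ. Qed.

Let FX_cdf : FX = Defs.cdf P (X i0).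
Proof. by case: sample => _ [_ [_ [_ [_ [cdfX _]]]]]; apply/funext => x; rewrite cdfX. Qed.

Lemma prob_Z_le i z : P (Z i @^-1` `]-oo, z]) = (FZ z)%:E.
Proof.
case: sample => _ [_ [_ [_ [cdfZ _]]]].
rewrite -(cdfZ i z) fineK // fin_num_measure //; exact: measurable_preimageT.
Qed.

Lemma prob_all_Z_gt z :
  P (\bigcap_(i in [set: 'I_n]) (Z i @^-1` `]z, +oo[ `&` X i @^-1` setT)) =
  ((1 - FZ z) ^+ n)%:E.
Proof.
case: sample => _ [_ [_ [_ [_ [_ [_ indep]]]]]].
rewrite (indep (fun _ => `]z, +oo[%classic) (fun _ => setT)) //.
have Pi i : P (Z i @^-1` `]z, +oo[ `&` X i @^-1` setT) = (1 - FZ z)%:E.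
  rewrite preimage_setT setIT -setCitvl -preimage_setC probability_setC.
    by rewrite prob_Z_le.
  exact: measurable_preimageT.
by rewrite (eq_bigr _ (fun i _ => Pi i)) prodEFin prodr_const card_ord.
Qed.

Lemma prob_Z_le_X_gt i z r a b : FZ z = Phi a -> Phi b <= FX r ->
  0 <= b - rho * a ->
  (P (Z i @^-1` `]-oo, z] `\` X i @^-1` `]-oo, r]) <=
   (Phi a * (1 - Phi (b - rho * a)))%:E)%E.
Proof.
move=> Fz br c0; case: sample => _ [_ [_ [_ [_ [_ [joint _]]]]]].
have mZX : measurable (Z i @^-1` `]-oo, z] `&` X i @^-1` `]-oo, r]).
  by apply: measurableI; exact: measurable_preimageT.
have mZz : measurable (Z i @^-1` `]-oo, z]) by exact: measurable_preimageT.
rewrite measureD //; last by rewrite -ge0_fin_numE // fin_num_measure.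
- rewrite [X in (X - _)%E](_ : _ = (FZ z)%:E); last exact: prob_Z_le.
  rewrite -(fineK (fin_num_measure _ _ mZX)) joint Fz -EFinB lee_fin.
  exact: gauss_copula_tail.
exact: measurable_preimageT.
Qed.

Lemma exists_FZ_eq u : 0 < u < 1 -> exists z, FZ z = u.
Proof.
case: sample => _ [_ [cZ _]]; rewrite FZ_cdf in cZ *.
by apply: IVT_cvg01 => //; [exact: cdf_cvgNy0 | exact: cdf_cvgy1].
Qed.

Lemma quantile_FX_attained alpha : 0 < alpha ->
  quantile FX alpha = +oo%E \/ exists2 r, quantile FX alpha = r%:E & alpha <= FX r.
Proof.
case: sample => _ [_ [_ [cX _]]] alpha0; apply: quantile_attained => //.
  by rewrite FX_cdf; exact: cdf_le.
by rewrite FX_cdf; exact: cvgNy0_lt (cdf_cvgNy0 P (mX i0)) alpha0.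
Qed.

Lemma prob_Z_le_X_gt_quantile i z a b alpha : 0 < alpha -> FZ z = Phi a ->
  Phi b <= alpha -> 0 <= b - rho * a ->
  (P (Z i @^-1` `]-oo, z] `&` ~` [set w | ((X i w)%:E <= quantile FX alpha)%E])
   <= (Phi a * (1 - Phi (b - rho * a)))%:E)%E.
Proof.
move=> alpha0 Fz ba c0; have [xs_oo|[r xs_r alpha_r]] := quantile_FX_attained alpha0.
  have -> : [set w | ((X i w)%:E <= quantile FX alpha)%E] = setT.
    by apply/seteqP; split => // w _ /=; rewrite xs_oo leey.
  by rewrite setCT setI0 measure0 lee_fin mulr_ge0 ?Phi_ge0 // subr_ge0 Phi_le1.
rewrite xs_r (_ : _ `&` _ = Z i @^-1` `]-oo, z] `\` X i @^-1` `]-oo, r]).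
  exact: prob_Z_le_X_gt (le_trans ba alpha_r) c0.
by apply/seteqP; split => w [Zw Xw]; split => //= Xr; apply: Xw;
  move: Xr; rewrite /= in_itv /= lee_fin.
Qed.

Lemma not_success_sub m z (xs : \bar R) : (0 < m)%N ->
  ~` success_event Z X m xs `<=`
  \bigcap_(i in [set: 'I_n]) (Z i @^-1` `]z, +oo[ `&` X i @^-1` setT) `|`
  \bigcup_(i in [set: 'I_n])
    (Z i @^-1` `]-oo, z] `&` ~` [set w | ((X i w)%:E <= xs)%E]).
Proof.
move=> m0 w notS; apply: contrapT => notEU; apply: notS.
apply: (success_event_level (z0 := z)) => // [|i Ziz].
  apply: contrapT => noZ; apply: notEU; left => i _; split => //=.
  by rewrite in_itv /= andbT ltNge; apply/negP => Ziz; apply: noZ; exists i.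
by apply: contrapT => Xi; apply: notEU; right; exists i.
Qed.

Lemma prob_not_success_le m alpha a b : (0 < m)%N -> 0 < alpha ->
  Phi b <= alpha -> 0 <= b - rho * a ->
  (P (~` success_event Z X m (quantile FX alpha)) <=
   ((1 - Phi a) ^+ n + n%:R * (Phi a * (1 - Phi (b - rho * a))))%:E)%E.
Proof.
move=> m0 alpha0 ba c0; set e := 1 - Phi (b - rho * a).
have Pa01 : 0 < Phi a < 1 by rewrite Phi_gt0 Phi_lt1.
have [z Fz] := exists_FZ_eq Pa01.
set xs := quantile FX alpha.
set E0 := \bigcap_(i in [set: 'I_n]) (Z i @^-1` `]z, +oo[ `&` X i @^-1` setT).
(* indexed by [nat] to fit [Boole_inequality] *)
pose B (k : nat) := if insub k is Some i then
  Z i @^-1` `]-oo, z] `&` ~` [set w | ((X i w)%:E <= xs)%E] else set0.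
have mB k : measurable (B k).
  rewrite /B; case: insub => // i.
  apply: measurableI; first exact: measurable_preimageT.
  exact/measurableC/measurable_EFin_le.
have mE0 : measurable E0.
  apply: fin_bigcap_measurable; first exact: finite_finset.
  by move=> i _; apply: measurableI; exact: measurable_preimageT.
have notS : ~` success_event Z X m xs `<=` E0 `|` \big[setU/set0]_(k < n) B k.
  move=> w /(not_success_sub z m0) [E0w|[i _ Biw]]; [by left | right].
  by apply: (bigsetU_sup (ltn_ord i)); rewrite /B valK.
have PB k : (P (B k) <= (Phi a * e)%:E)%E.
  rewrite /B; case: insub => [i|]; first exact: prob_Z_le_X_gt_quantile.
  by rewrite measure0 lee_fin mulr_ge0 ?Phi_ge0 // subr_ge0 Phi_le1.
apply: le_trans (le_measure _ _ _ notS) _; rewrite ?inE.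
- exact/measurableC/measurable_success_event.
- by apply: measurableU => //; exact: bigsetU_measurable.
apply: le_trans (measureU2 _ mE0 (bigsetU_measurable _ _)) _ => //.
rewrite EFinD; apply: leeD.
  rewrite [X in (X <= _)%E](_ : _ = ((1 - Phi a) ^+ n)%:E) //.
  by rewrite -Fz; exact: prob_all_Z_gt.
apply: le_trans (Boole_inequality _ _) _ => //.
apply: (@le_trans _ _ (\sum_(k < n) (Phi a * e)%:E)%E).
  by apply: lee_sum => k _; exact: PB.
by rewrite sumEFin sumr_const card_ord mulr_natl.
Qed.

Lemma success_prob_ge m alpha a b : (0 < m)%N -> 0 < alpha ->
  Phi b <= alpha -> 0 <= b - rho * a ->
  ((1 - (1 - Phi a) ^+ n - n%:R * (Phi a * (1 - Phi (b - rho * a))))%:E <=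
   P (success_event Z X m (quantile FX alpha)))%E.
Proof.
move=> m0 alpha0 ba c0.
have mS : measurable (success_event Z X m (quantile FX alpha)).
  exact: measurable_success_event.
have := prob_not_success_le m0 alpha0 ba c0; rewrite probability_setC //.
by rewrite -(fineK (fin_num_measure _ _ mS)) -EFinB !lee_fin; lra.
Qed.

End gauss_copula_sample.

Unset Implicit Arguments.

Theorem mainTheorem9 (R : realType) (alpha rho delta : R) :
  0 < alpha <= 1 -> 0 < rho <= 1 -> 0 < delta <= 1 ->
  exists nbar : nat, forall m n : nat, (1 <= m <= n)%N -> (nbar <= n)%N ->
  forall (d : measure_display) (T : measurableType d) (P : probability T R)
    (FZ FX : R -> R) (Z X : 'I_n -> T -> R),
  gauss_copula_sample P rho FZ FX Z X ->
  ((1 - delta)%:E <= P (success_event Z X m (quantile FX alpha)))%E.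
Proof.
move=> /andP[alpha0 _] rho01 /andP[delta0 _].
have [b Phib] := cvgNy0_lt Phi_cvgNy0 alpha0.
have eps0 : 0 < delta ^+ 2 / 4 by rewrite divr_gt0 // exprn_gt0.
have [K K0 tailK] := Phi_tail_le eps0.
have c0 : 0 < 2 / delta by rewrite divr_gt0.
have [nbar PhiA] := Phi_eq_divn ((b - K) / rho) c0.
exists nbar => m n /andP[m0 mn] nbar_n d T P FZ FX Z X sample.
have [a aA nPa] := PhiA n nbar_n.
have Kba : K <= b - rho * a.
  move: aA; rewrite ler_pdivlMr; last by case/andP: rho01.
  by rewrite mulrC; lra.
apply: le_trans (success_prob_ge sample rho01 (leq_trans m0 mn) m0 alpha0
  (ltW Phib) (le_trans K0 Kba)); rewrite lee_fin.
by apply: sample_size_bound => //; [rewrite Phi_ge0 Phi_le1 | exact: tailK].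
Qed.
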